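(* Let $n\ge1$ and let $\mathfrak{c}=\{c_{ij}\}_{1\le i<j\le n}$, $\mathfrak{\ell}=\{\ell_1,\dots,\ell_n\}$ be integers. Let $C=C(\mathfrak{c},\mathfrak{\ell})$ be the support of the associated Grossberg–Karshon twisted cube, $\{m_\sigma\}_{\sigma\in\{+,-\}^n}$ the Cartier data of the divisor $D(\mathfrak{c},\mathfrak{\ell})$ on $X(\mathfrak{c})$, and $P_{D(\mathfrak{c},\mathfrak{\ell})}$ the associated polytope. Then the following are equivalent: (a) $C$ is closed in $\mathbb{R}^n$ (Euclidean topology); (b) $m_\sigma\in C$ for all $\sigma$; (c) $m_{\sigma,k}\ge0$ for all $\sigma$ and all $1\le k\le n$, where $m_\sigma=(m_{\sigma,1},\dots,m_{\sigma,n})$; (d) $\mathfrak{c},\mathfrak{\ell}$ satisfy condition (P); (e) $C=P_{D(\mathfrak{c},\mathfrak{\ell})}$.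
   Context: Functions on $\mathbb{R}^n$: $A_n(x)=\ell_n$ and $A_j(x)=\ell_j-\sum_{k=j+1}^n c_{jk}x_k$ for $1\le j\le n-1$ (so $A_j$ depends only on $x_{j+1},\dots,x_n$). $C(\mathfrak{c},\mathfrak{\ell})$ is the set of $x\in\mathbb{R}^n$ such that for every $1\le k\le n$: $A_k(x)<x_k<0$ or $0\le x_k\le A_k(x)$. Condition (P): $\ell_n\ge0$, and for every $1\le k\le n-1$: whenever $(x_{k+1},\dots,x_n)$ satisfies $0\le x_i\le A_i(x_{i+1},\dots,x_n)$ for all $k+1\le i\le n$, then $A_k(x_{k+1},\dots,x_n)\ge0$. Toric data: $e_1^+,\dots,e_n^+$ standard basis of $\mathbb{R}^n$, $e_j^-:=-e_j^+-\sum_{k>j}c_{jk}e_k^+$; $\Sigma_{\mathfrak{c}}$ is the fan of cones generated by subsets of $\{e_1^\pm,\dots,e_n^\pm\}$ containing no pair $\{e_j^+,e_j^-\}$, with maximal cones $\mathrm{Cone}\{e_1^{\sigma_1},\dots,e_n^{\sigma_n}\}$, $\sigma\in\{+,-\}^n$; $X(\mathfrak{c})$ its smooth toric variety; $D(\mathfrak{c},\mathfrak{\ell})=\sum_j\ell_jD_{e_j^-}$ with $D_{e_j^-}$ the torus-invariant divisor of the ray through $e_j^-$. Its Cartier data is the collection $m_\sigma\in\mathbb{Z}^n$ with $\langle m_\sigma,u\rangle=-a_u$ for each ray generator $u\in\{e_1^{\sigma_1},\dots,e_n^{\sigma_n}\}$ of $\sigma$, where $a_{e_j^+}=0$, $a_{e_j^-}=\ell_j$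 and $\langle\cdot,\cdot\rangle$ is the standard inner product. $P_{D(\mathfrak{c},\mathfrak{\ell})}=\{x\in\mathbb{R}^n: 0\le x_j\le A_j(x)\ \forall j\}$. *)

(* Points of R^n are row vectors 'rV[R]_n,
   with the (sup-norm = Euclidean) topology of mathcomp-analysis. *)
From HB Require Import structures.
From mathcomp Require Import all_boot all_order all_algebra.
From mathcomp Require Import all_classical all_reals all_analysis.
Set Implicit Arguments. Unset Strict Implicit. Unset Printing Implicit Defensive.
Import Order.TTheory GRing.Theory Num.Theory.
Local Open Scope ring_scope.
Local Open Scope classical_set_scope.

(* c : 'I_n -> 'I_n -> int  (only c j k with j < k is used), l : 'I_n -> int. *)

Definition Afun (R : realType) (n : nat) (c : 'I_n -> 'I_n -> int)
  (l : 'I_n -> int) (j : 'I_n) (x : 'rV[R]_n) : R :=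
  (l j)%:~R - \sum_(k < n | (j < k)%N) (c j k)%:~R * x ord0 k.

Definition GKsupport (R : realType) (n : nat) (c : 'I_n -> 'I_n -> int)
  (l : 'I_n -> int) : set 'rV[R]_n :=
  [set x : 'rV[R]_n | forall k : 'I_n,
     (Afun c l k x < x ord0 k < 0) \/ (0 <= x ord0 k <= Afun c l k x)].

Definition PD (R : realType) (n : nat) (c : 'I_n -> 'I_n -> int)
  (l : 'I_n -> int) : set 'rV[R]_n :=
  [set x : 'rV[R]_n | forall j : 'I_n, 0 <= x ord0 j <= Afun c l j x].

Definition condP (R : realType) (n : nat) (c : 'I_n -> 'I_n -> int)
  (l : 'I_n -> int) : Prop :=
  (forall k : 'I_n, k.+1 = n -> 0 <= l k) /\
  (forall k : 'I_n, (k.+1 < n)%N ->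
     forall x : 'rV[R]_n,
       (forall i : 'I_n, (k < i)%N -> 0 <= x ord0 i <= Afun c l i x) ->
       0 <= Afun c l k x).

Definition e_plus (n : nat) (j : 'I_n) : 'rV[int]_n := delta_mx ord0 j.
Definition e_minus (n : nat) (c : 'I_n -> 'I_n -> int) (j : 'I_n) : 'rV[int]_n :=
  - e_plus j - \sum_(k < n | (j < k)%N) c j k *: e_plus k.

(* Sign vectors sigma in {+,-}^n : true = +, false = -. *)
Definition e_sign (n : nat) (c : 'I_n -> 'I_n -> int) (s : 'I_n -> bool)
  (j : 'I_n) : 'rV[int]_n := if s j then e_plus j else e_minus c j.

(* Coefficient a_u of D(c,l) = sum_j l_j D_{e_j^-}: a_{e_j^+} = 0, a_{e_j^-} = l_j. *)
Definition a_sign (n : nat) (l : 'I_n -> int) (s : 'I_n -> bool) (j : 'I_n) : int :=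
  if s j then 0 else l j.

Definition dotZ (n : nat) (u v : 'rV[int]_n) : int := \sum_(i < n) u ord0 i * v ord0 i.

(* m is the Cartier data of D(c,l) on X(c): <m_sigma, u> = - a_u for each ray
   generator u = e_j^{sigma_j} of the maximal cone sigma. *)
Definition is_cartier_data (n : nat) (c : 'I_n -> 'I_n -> int) (l : 'I_n -> int)
  (m : ('I_n -> bool) -> 'rV[int]_n) : Prop :=
  forall (s : 'I_n -> bool) (j : 'I_n), dotZ (m s) (e_sign c s j) = - a_sign l s j.

Definition toR (R : realType) (n : nat) (v : 'rV[int]_n) : 'rV[R]_n :=
  map_mx (fun z : int => z%:~R) v.

From HB Require Import structures.
From mathcomp Require Import all_boot all_order all_algebra.
From mathcomp Require Import all_classical all_reals all_analysis.
From mathcomp Require Import ring lra zify.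
Import Order.TTheory GRing.Theory Num.Theory.
Import numFieldNormedType.Exports.
Local Open Scope ring_scope.
Local Open Scope classical_set_scope.

(* The vertices [m_s] of the twisted cube satisfy [m_{s,j} = 0] when [s_j = +] and
   [m_{s,j} = A_j(m_s)] when [s_j = -]; moreover [A_k(m_s) = m_{s',k}] for the sign
   vector [s'] that differs from [s] only by [s'_k = -]. Hence (P) makes every [m_s]
   nonnegative, by downward induction on the coordinates. Conversely, an affine
   function of [x_j, ..., x_n] that is nonnegative at every [m_s] is nonnegative where
   [0 <= x_i <= A_i x] for all [i >= j]: [x_j] lies between its two vertex values [0]
   and [A_j x], and substituting either one gives such a function of fewer variables.
   Applied to [A_k], this turns [m_s >= 0] into (P). Under (P) no coordinate of a point
   of [C] can be twisted, as [A_j x < x_j < 0] would force [A_j x < 0]; so [C = P_D],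
   which is closed. If (P) fails at [k] and [y], the point [z] with [z_i = y_i] above
   [k] and [z_i = 0] otherwise is not in [C] but is a limit of points of [C] whose
   coordinates up to [k] are twisted or zero. *)

Set Implicit Arguments.
Unset Strict Implicit.
Unset Printing Implicit Defensive.

Lemma ord_down_ind (n : nat) (P : 'I_n -> Prop) :
  (forall j : 'I_n, (forall i : 'I_n, (j < i)%N -> P i) -> P j) ->
  forall j, P j.
Proof.
move=> IH; suff Pd d (j : 'I_n) : (n - j <= d)%N -> P j by move=> j; apply: (Pd n); lia.
elim: d j => [|d IHd] j hj; first by have := ltn_ord j; lia.
by apply: IH => i ji; apply: IHd; have := ltn_ord i; lia.
Qed.

Lemma ord_gtn_eqF (n : nat) (i k : 'I_n) : (k < i)%N -> (i == k) = false.
Proof. by move=> ki; apply/eqP => ik; rewrite ik ltnn in ki. Qed.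

Lemma sum_mul_eq_idx {n : nat} (F : 'I_n -> int) k :
  \sum_(i < n) F i * (i == k)%:R = F k.
Proof.
by rewrite (bigD1 k) //= eqxx mulr1 big1 ?addr0 // => i /negbTE ->; rewrite mulr0.
Qed.

Lemma dotZ_e_plus {n : nat} (u : 'rV[int]_n) j : dotZ u (e_plus j) = u ord0 j.
Proof.
rewrite /dotZ -[RHS](sum_mul_eq_idx (fun i => u ord0 i)).
by apply: eq_bigr => i _; rewrite /e_plus mxE eqxx.
Qed.

Lemma dotZ_e_minus {n : nat} (c : 'I_n -> 'I_n -> int) (u : 'rV[int]_n) j :
  dotZ u (e_minus c j) = - u ord0 j - \sum_(k < n | (j < k)%N) c j k * u ord0 k.
Proof.
rewrite /dotZ; under eq_bigr => i _ do rewrite !mxE summxE mulrBr.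
rewrite sumrB; congr (_ - _).
  rewrite -[RHS](sum_mul_eq_idx (fun i => - u ord0 i)); apply: eq_bigr => i _.
  by rewrite eqxx mulrN mulNr.
under eq_bigr => i _ do rewrite mulr_sumr.
rewrite exchange_big /=; apply: eq_bigr => k _.
rewrite -(sum_mul_eq_idx (fun i => c j k * u ord0 i)); apply: eq_bigr => i _.
by rewrite !mxE /= mulrCA mulrA.
Qed.

Section TwistedCube.
Variables (R : realType) (n : nat) (c : 'I_n -> 'I_n -> int) (l : 'I_n -> int).
Implicit Types (x y : 'rV[R]_n) (i j k : 'I_n).

Local Notation A := (@Afun R n c l).

Definition feasible x i := 0 <= x ord0 i <= A i x.

Definition twisted x i := A i x < x ord0 i < 0.

Lemma GKsupportE x : GKsupport c l x <-> forall i, twisted x i \/ feasible x i.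
Proof. by []. Qed.

Lemma eq_Afun j x y : (forall k, (j < k)%N -> x ord0 k = y ord0 k) -> A j x = A j y.
Proof. by move=> xy; congr (_ - _); apply: eq_bigr => k jk; rewrite xy. Qed.

Lemma Afun_last k x : k.+1 = n -> A k x = (l k)%:~R.
Proof. by move=> kn; rewrite /Afun big1 ?subr0 // => i ki; have := ltn_ord i; lia. Qed.

Lemma continuous_Afun j : continuous (A j).
Proof.
move=> x; apply: continuousB; first exact: cst_continuous.
apply: (continuous_big add_continuous) => k _ y.
exact: continuousM (@cst_continuous _ _ _ y) (@coord_continuous R 1 n ord0 k y).
Qed.

Lemma closed_PD : closed (PD (R:=R) c l).
Proof.
have -> : PD c l = \bigcap_(j in [set: 'I_n])
    ([set x : 'rV[R]_n | 0 <= x ord0 j] `&` [set x | 0 <= A j x - x ord0 j]).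
  apply/seteqP; split => x /= hx.
    by move=> j _; have /andP[? ?] := hx j; split; rewrite //= subr_ge0.
  by move=> j; have [/= -> ] := hx j I; rewrite subr_ge0.
apply: closed_bigI => j _; apply: closedI.
  apply: (@preimage_closed _ _ (fun x : 'rV[R]_n => x ord0 j) [set r | 0 <= r]).
    by move=> x _; exact: coord_continuous.
  exact: closed_ge.
apply: (@preimage_closed _ _ (fun x => A j x - x ord0 j) [set r | 0 <= r]).
  by move=> x _; apply: continuousB; [exact: continuous_Afun | exact: coord_continuous].
exact: closed_ge.
Qed.

Lemma PD_sub_GKsupport : PD (R:=R) c l `<=` GKsupport c l.
Proof. by move=> x hx k; right; exact: hx. Qed.

Definition condP_full :=
  forall k x, (forall i, (k < i)%N -> feasible x i) -> 0 <= A k x.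

Lemma condP_fullE : condP R c l <-> condP_full.
Proof.
split=> [[hlast hP] k x hx|hP]; last split.
- have [kn|nk] := ltnP k.+1 n; first exact: hP.
  have kn : k.+1 = n by move: (ltn_ord k); lia.
  by rewrite Afun_last // ler0z hlast.
- move=> k kn; rewrite -(ler0z R) -(Afun_last 0 kn); apply: hP => i ki.
  by have := ltn_ord i; lia.
- by move=> k _; exact: hP.
Qed.

Lemma GKsupport_eq_PD : condP_full -> GKsupport (R:=R) c l = PD c l.
Proof.
move=> hP; apply/seteqP; split; last exact: PD_sub_GKsupport.
move=> x /GKsupportE hx; apply: ord_down_ind => j above.
case: (hx j) => // /andP[Ax x0]; have := hP j x above.
by rewrite leNgt (lt_trans Ax x0).
Qed.

Definition twist (e a : R) : R :=
  if 0 <= a then 0 else if a / 2 < - e then - e else a / 2.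

Lemma twistP e a : 0 < e ->
  (a < twist e a < 0 \/ 0 <= twist e a <= a) /\ - e <= twist e a <= 0.
Proof.
move=> e0; rewrite /twist; case: ifPn => [a0|]; first by split; [right|]; lra.
rewrite -ltNge => a0; case: ifPn => [ae|]; last rewrite -leNgt => ae.
  by split; [left|]; lra.
by split; [left|]; lra.
Qed.

Lemma exists_GKsupport_coords_near k y e : 0 < e -> exists x,
  (forall i, (k < i)%N -> x ord0 i = y ord0 i) /\
  (forall i, (i <= k)%N -> (twisted x i \/ feasible x i) /\ - e <= x ord0 i <= 0).
Proof.
move=> e0.
suff near d : (d <= k.+1)%N -> exists x,
    (forall i, (k < i)%N -> x ord0 i = y ord0 i) /\
    (forall i, (k.+1 - d <= i)%N -> (i <= k)%N ->
       (twisted x i \/ feasible x i) /\ - e <= x ord0 i <= 0).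
  have [x [xy xk]] := near k.+1 (leqnn _).
  by exists x; split => // i; apply: xk; lia.
elim: d => [|d IH] dk; first by exists y; split => // i; lia.
have [x [xy xk]] := IH (ltnW dk).
have jn : (k - d < n)%N by move: (ltn_ord k); lia.
pose j := Ordinal jn; have jE : (j : nat) = (k - d)%N by [].
pose x' := \row_i (if i == j then twist e (A j x) else x ord0 i) : 'rV[R]_n.
have x'E i : x' ord0 i = if i == j then twist e (A j x) else x ord0 i by rewrite mxE.
have Ax' i : (j <= i)%N -> A i x' = A i x.
  by move=> ji; apply: eq_Afun => i' ii'; rewrite x'E ord_gtn_eqF //; lia.
exists x'; split => [i ki|i ik1 ik].
  by rewrite x'E ord_gtn_eqF ?xy //=; lia.
have [->|ij] := eqVneq i j.
  by rewrite /twisted /feasible Ax' // x'E eqxx; exact: twistP.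
have ji : (j < i)%N by rewrite ltn_neqAle eq_sym ij /=; lia.
rewrite /twisted /feasible Ax' 1?ltnW // x'E ord_gtn_eqF //.
by apply: xk => //; lia.
Qed.

Lemma not_closed_GKsupport k y :
  (forall i, (k < i)%N -> feasible y i) -> A k y < 0 -> ~ closed (GKsupport (R:=R) c l).
Proof.
move=> yk Ay; pose z := \row_i (if (k < i)%N then y ord0 i else 0) : 'rV[R]_n.
have Az : A k z = A k y by apply: eq_Afun => i ki; rewrite mxE ki.
have zC : ~ GKsupport c l z.
  by move=> /(_ k); rewrite Az mxE ltnn => -[] /andP[]; lra.
move=> /closure_id zclC; apply: zC; rewrite zclC => B /nbhs_ballP [e /= e0 eB].
have e20 : 0 < e / 2 by lra.
have [x [xy xk]] := exists_GKsupport_coords_near k y e20.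
exists x; split.
  move=> i; have [ik|ki] := leqP i k; first by case: (xk i ik).
  have Axy : A i x = A i y.
    by apply: eq_Afun => i' ii'; apply: xy; exact: ltn_trans ii'.
  by right; rewrite /feasible xy // Axy; exact: yk.
apply: eB; split => //= i0 i; rewrite (ord1 i0) !mxE -ball_normE /=.
have [ik|ki] := leqP i k; last by rewrite xy // subrr normr0.
have [_ /andP[xe x0]] := xk i ik.
by rewrite sub0r normrN ltr_norml; apply/andP; split; lra.
Qed.

Lemma condP_full_of_closed : closed (GKsupport (R:=R) c l) -> condP_full.
Proof.
by move=> hcl k y yk; rewrite leNgt; apply/negP => Ay; exact: not_closed_GKsupport yk Ay hcl.
Qed.

Definition affine (a : R) (b : 'I_n -> R) x := a + \sum_i b i * x ord0 i.

Lemma Afun_affine k :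
  A k = affine (l k)%:~R (fun i => if (k < i)%N then - (c k i)%:~R else 0).
Proof.
apply: funext => x; rewrite /Afun /affine big_mkcond /= -sumrN.
by congr (_ + _); apply: eq_bigr => i _; case: ifP; rewrite ?mulNr ?mul0r ?oppr0.
Qed.

Lemma eq_affine_above j a b x y : (forall i, (i <= j)%N -> b i = 0) ->
  (forall i, (j < i)%N -> x ord0 i = y ord0 i) -> affine a b x = affine a b y.
Proof.
move=> b0 xy; congr (_ + _); apply: eq_bigr => i _.
by have [ij|ji] := leqP i j; [rewrite b0 // !mul0r | rewrite xy].
Qed.

Definition drop_coef (b : 'I_n -> R) j i := if i == j then 0 else b i.

Lemma affine_drop_coef j a b x :
  affine a b x = affine a (drop_coef b j) x + b j * x ord0 j.
Proof.
rewrite /affine (bigD1 j) //= [X in _ = _ + X + _](bigD1 j) //= /drop_coef eqxx mul0r add0r.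
have -> : \sum_(i < n | i != j) (if i == j then 0 else b i) * x ord0 i =
          \sum_(i < n | i != j) b i * x ord0 i.
  by apply: eq_bigr => i /negbTE ->.
ring.
Qed.

(* Substituting [x_j := A_j x] into an affine function gives an affine function
   without the coordinate [j]. *)
Lemma affine_subst_Afun j a b x :
  affine (a + b j * (l j)%:~R)
    (fun i => drop_coef b j i + b j * (if (j < i)%N then - (c j i)%:~R else 0)) x
  = affine a (drop_coef b j) x + b j * A j x.
Proof.
rewrite Afun_affine /affine.
under eq_bigr => i _ do rewrite mulrDl -mulrA.
rewrite big_split /= -mulr_sumr; ring.
Qed.

Lemma affine_ge0_segment (u b t a : R) :
  0 <= u -> 0 <= u + b * a -> 0 <= t <= a -> 0 <= u + b * t.
Proof. by move=> u0 ua /andP[t0 ta]; case: (lerP 0 b) => b0; nra. Qed.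

Section CartierData.
Variables (m : ('I_n -> bool) -> 'rV[int]_n) (hm : is_cartier_data c l m).
Implicit Types (s : 'I_n -> bool).

Local Notation vertex s := (toR R (m s)).

Lemma vertex_coord s j : vertex s ord0 j = (m s ord0 j)%:~R.
Proof. exact: mxE. Qed.

Lemma cartierE s j : m s ord0 j =
  if s j then 0 else l j - \sum_(k < n | (j < k)%N) c j k * m s ord0 k.
Proof.
have := hm s j; rewrite /e_sign /a_sign; case: (s j); first by rewrite dotZ_e_plus oppr0.
by rewrite dotZ_e_minus; lia.
Qed.

Lemma vertexE s j : vertex s ord0 j = if s j then 0 else A j (vertex s).
Proof.
rewrite vertex_coord cartierE; case: (s j) => //.
rewrite intrB rmorph_sum; congr (_ - _); apply: eq_bigr => k _.
by rewrite rmorphM vertex_coord.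
Qed.

Lemma eq_vertex_above s s' j : (forall i, (j < i)%N -> s i = s' i) ->
  forall i, (j < i)%N -> vertex s ord0 i = vertex s' ord0 i.
Proof.
move=> ss' i; elim/ord_down_ind: i => i IH ji.
rewrite !vertexE ss' //; case: (s' i) => //; apply: eq_Afun => k ik.
by apply: IH => //; exact: ltn_trans ik.
Qed.

Definition set_sign s j (b : bool) i := if i == j then b else s i.

Lemma set_sign_at s j b : set_sign s j b j = b.
Proof. by rewrite /set_sign eqxx. Qed.

Lemma vertex_set_sign_above s j b i :
  (j < i)%N -> vertex (set_sign s j b) ord0 i = vertex s ord0 i.
Proof. by apply: eq_vertex_above => i' ji'; rewrite /set_sign ord_gtn_eqF. Qed.

Lemma Afun_vertex s k : A k (vertex s) = vertex (set_sign s k false) ord0 k.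
Proof.
rewrite vertexE set_sign_at; apply: eq_Afun => i ki.
by rewrite vertex_set_sign_above.
Qed.

Lemma vertex_in_GKsupportP :
  (forall s, GKsupport c l (vertex s)) <-> (forall s k, 0 <= m s ord0 k).
Proof.
split=> [vC s k|m0 s k].
  rewrite -(ler0z R) -vertex_coord; have := vC s k; rewrite vertexE.
  by case: (s k) => //= -[] /andP[] //; rewrite ltxx.
have Ak0 : 0 <= A k (vertex s) by rewrite Afun_vertex vertex_coord ler0z.
by right; rewrite vertexE; case: (s k); rewrite ?lexx ?Ak0.
Qed.

Lemma cartier_ge0 : condP_full -> forall s k, 0 <= m s ord0 k.
Proof.
move=> hP s; suff feas k : feasible (vertex s) k.
  by move=> k; have /andP[] := feas k; rewrite vertex_coord ler0z.
elim/ord_down_ind: k => k above; have Ak0 := hP k _ above.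
by rewrite /feasible vertexE; case: (s k); rewrite ?lexx ?Ak0.
Qed.

(* For the lowest coordinate [j], [x_j] lies between [0] and [A_j x], its values at
   the vertices with [s j = true] and [s j = false]. *)
Lemma affine_ge0_of_vertices d a b :
  (forall i, (i < n - d)%N -> b i = 0) ->
  (forall s, 0 <= affine a b (vertex s)) ->
  forall x, (forall i, (n - d <= i)%N -> feasible x i) -> 0 <= affine a b x.
Proof.
elim: d a b => [|d IH] a b b0 bv x feas.
  suff -> : affine a b x = affine a b (vertex (fun=> true)) by [].
  by congr (_ + _); apply: eq_bigr => i _; rewrite b0 ?mul0r ?subn0.
have [nd|dn] := leqP n d.
  by apply: IH => // [i id|i id]; [apply: b0 | apply: feas]; lia.
have jn : (n - d.+1 < n)%N by lia.
pose j := Ordinal jn; have jE : (j : nat) = (n - d.+1)%N by [].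
pose b' i := drop_coef b j i + b j * (if (j < i)%N then - (c j i)%:~R else 0).
have b'0 i : (i <= j)%N -> drop_coef b j i = 0 /\ b' i = 0.
  move=> ij; have d0 : drop_coef b j i = 0.
    rewrite /drop_coef; case: eqP => // /eqP ij'; apply: b0.
    by rewrite -jE ltn_neqAle ij' ij.
  by split => //; rewrite /b' d0 ltnNge ij mulr0 addr0.
have feas_above i : (n - d <= i)%N -> feasible x i by move=> ?; apply: feas; lia.
have H0 : 0 <= affine a (drop_coef b j) x.
  apply: IH => [i id|s|//]; first by apply: (proj1 (b'0 i _)); rewrite jE; lia.
  have := bv (set_sign s j true); rewrite (affine_drop_coef j) vertexE set_sign_at.
  rewrite mulr0 addr0 (@eq_affine_above j _ _ _ (vertex s)) // => [i /b'0[] //|i].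
  exact: vertex_set_sign_above.
have H1 : 0 <= affine (a + b j * (l j)%:~R) b' x.
  apply: IH => [i id|s|//]; first by apply: (proj2 (b'0 i _)); rewrite jE; lia.
  have := bv (set_sign s j false).
  rewrite (affine_drop_coef j) vertexE set_sign_at -affine_subst_Afun.
  rewrite (@eq_affine_above j _ _ _ (vertex s)) // => [i /b'0[] //|i].
  exact: vertex_set_sign_above.
rewrite affine_subst_Afun in H1; rewrite (affine_drop_coef j).
by apply: affine_ge0_segment H0 H1 _; apply: feas; rewrite jE.
Qed.

Lemma condP_full_of_cartier_ge0 : (forall s k, 0 <= m s ord0 k) -> condP_full.
Proof.
move=> m0 k x feas; rewrite Afun_affine.
apply: (@affine_ge0_of_vertices (n - k.+1)) => [i ik|s|i ki].
- by rewrite ifN // -leqNgt; move: (ltn_ord k); lia.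
- by rewrite -Afun_affine Afun_vertex vertex_coord ler0z.
- by apply: feas; move: (ltn_ord k); lia.
Qed.

End CartierData.

End TwistedCube.

Theorem proposition2p1 (R : realType) (n : nat) (hn : (1 <= n)%N)
  (c : 'I_n -> 'I_n -> int) (l : 'I_n -> int)
  (m : ('I_n -> bool) -> 'rV[int]_n) (hm : is_cartier_data c l m) :
  let C := GKsupport (R:=R) c l in
  (closed (C : set 'rV[R]_n) <-> (forall s, C (toR R (m s)))) /\
  ((forall s, C (toR R (m s))) <-> (forall s (k : 'I_n), 0 <= m s ord0 k)) /\
  ((forall s (k : 'I_n), 0 <= m s ord0 k) <-> condP R c l) /\
  (condP R c l <-> C = PD (R:=R) c l).
Proof.
move=> C; have hPf := condP_fullE R c l; have hv := vertex_in_GKsupportP R hm.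
split; [|split; [exact: hv|split]].
- split=> [/condP_full_of_closed/(cartier_ge0 hm)/hv //|].
  move=> /hv/(condP_full_of_cartier_ge0 (R:=R) hm) hP.
  by rewrite /C (GKsupport_eq_PD hP); exact: closed_PD.
- by split=> [/(condP_full_of_cartier_ge0 (R:=R) hm)/hPf|/hPf/(cartier_ge0 hm)].
- split=> [/hPf/GKsupport_eq_PD //|CP]; apply/hPf/condP_full_of_closed.
  by rewrite -/C CP; exact: closed_PD.
Qed.
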